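(* Let $\bar{\mathcal{G}}=(\bar{\mathcal{V}},\bar{\mathcal{E}})$ be a finite simple 2-connected graph and $\bar u\in\bar{\mathcal{V}}$, $L=|\bar{\mathcal{V}}|-1$. Then there is an enumeration $\bar v_1,\dots,\bar v_L$ of $\bar{\mathcal{V}}\setminus\{\bar u\}$ such that, writing $\bar{\mathcal{V}}_l=\{\bar v_1,\dots,\bar v_l\}$ and $\mathcal{V}_l$ for the set of edges of $\bar{\mathcal{G}}$ incident to at least one vertex of $\bar{\mathcal{V}}_l$: (i) the graph $\mathrm{LG}(\bar{\mathcal{V}}_l)$ is connected for every $l=1,\dots,L$, and (ii) $\mathcal{V}_l\setminus\mathcal{V}_{l-1}\ne\emptyset$ for every $l=2,\dots,L$.
   Context: For $\bar{\mathcal{V}}'\subseteq\bar{\mathcal{V}}$, $\mathrm{LG}(\bar{\mathcal{V}}')$ is the graph whose vertex set is the set of edges of $\bar{\mathcal{G}}$ incident to at least one vertex of $\bar{\mathcal{V}}'$, in which two distinct such edges $e,e'$ are adjacent iff they share an endpoint belonging to $\bar{\mathcal{V}}'$. (Equivalently, $\mathrm{LG}(\bar{\mathcal{V}}')$ is obtained by placing a complete graph on the set of edges incident to each $\bar v\in\bar{\mathcal{V}}'$ and gluing.) $\mathrm{LG}(\bar{\mathcal{V}})$ is the line graph of $\bar{\mathcal{G}}$. A graph is 2-connected if it is connected, has at least 3 vertices, and has no cut vertex. *)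

From mathcomp Require Import all_boot.
Set Implicit Arguments. Unset Strict Implicit. Unset Printing Implicit Defensive.

Definition simple_graph (T : finType) (e : rel T) : Prop :=
  symmetric e /\ irreflexive e.

Definition edges (T : finType) (e : rel T) : {set {set T}} :=
  [set E : {set T} | [exists x, exists y, e x y && (E == [set x; y])]].

(* A (vertex set A, relation r) graph is connected: any two vertices of A are
   joined by an r-path staying inside A. (Empty A counts as connected, but
   it is never empty where used.) *)
Definition connected_on (U : finType) (A : {set U}) (r : rel U) : Prop :=
  forall x y, x \in A -> y \in A ->
    connect (fun a b => [&& a \in A, b \in A & r a b]) x y.

Definition graph_connected (T : finType) (e : rel T) : Prop :=
  connected_on [set: T] e.

Definition two_connected (T : finType) (e : rel T) : Prop :=
  [/\ graph_connected e, 3 <= #|T| &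
      forall v : T, connected_on [set~ v] e].

Definition inc_edges (T : finType) (e : rel T) (V' : {set T}) : {set {set T}} :=
  [set E in edges e | [exists v in V', v \in E]].

Definition LG_adj (T : finType) (V' : {set T}) : rel {set T} :=
  fun E E' => (E != E') && [exists v in V', (v \in E) && (v \in E')].

Definition LG_connected (T : finType) (e : rel T) (V' : {set T}) : Prop :=
  connected_on (inc_edges e V') (LG_adj V').

From mathcomp Require Import all_boot.
Set Implicit Arguments. Unset Strict Implicit. Unset Printing Implicit Defensive.

(* The enumeration is built from the end by "peeling": starting
   from W = V \ {u}, which is connected because u is not a cut vertex, we
   repeatedly remove a vertex x of the current connected set W such that
   (a) x has a neighbour outside W, and (b) W \ {x} is still connected.
   Listing the removed vertices in reverse order gives v_1, ..., v_L whose
   prefixes V_l are all connected, and v_l has an edge {v_l, z} with z outside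
   V_l: this edge is incident to V_l but not to V_{l-1}, which gives (ii).
   Connectivity of the induced subgraph on V_l implies connectivity of
   LG(V_l), which gives (i).
   The existence of a peelable vertex (lemma [peel]) is the heart of the proof:
   pick a boundary vertex x of W and a component C of W \ {x}; since x is not
   a cut vertex, C contains a boundary vertex y.  Either W \ {y} is connected,
   or some component of W \ {y} lies strictly inside C, and we conclude by
   induction on the size of the component. *)

Definition induced (T : finType) (r : rel T) (A : {set T}) : rel T :=
  fun a b => [&& a \in A, b \in A & r a b].

Lemma connect_exit (T : finType) (r : rel T) (C : {set T}) a b :
  connect r a b -> a \in C -> b \notin C ->
  exists x y, [/\ r x y, x \in C & y \notin C].
Proof.
move/connectP=> [p]; elim: p a => [|c p IH] a /=; first by move=> _ -> ->.
move=> /andP[rac pc] lb aC bC.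
have [cC|cC] := boolP (c \in C); first exact: IH pc lb cC bC.
by exists a, c.
Qed.

Lemma edge_incident (T : finType) (e : rel T) (V : {set T}) a c :
  e a c -> a \in V -> [set a; c] \in inc_edges e V.
Proof.
move=> eac aV; rewrite inE; apply/andP; split.
  by rewrite inE; apply/existsP; exists a; apply/existsP; exists c; rewrite eac eqxx.
by apply/exists_inP; exists a; rewrite // !inE eqxx.
Qed.

Lemma new_edge (T : finType) (e : rel T) (V : {set T}) x z :
  e x z -> x \in V -> z \notin V ->
  [set x; z] \in inc_edges e V :\: inc_edges e (V :\ x).
Proof.
move=> exz xV zV; rewrite in_setD (edge_incident exz xV) andbT inE negb_and.
apply/orP; right; apply/exists_inPn => v; rewrite !inE => /andP[vx vV].
by apply/negP => /orP[/eqP vx'|/eqP vz]; [rewrite vx' eqxx in vx | rewrite -vz vV in zV].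
Qed.

Lemma LG_connected_of_connected (T : finType) (e : rel T) (V : {set T}) :
  connected_on V e -> LG_connected e V.
Proof.
move=> VC E E' EI E'I.
set R := fun a b => [&& a \in inc_edges e V, b \in inc_edges e V & LG_adj V a b].
have share v F F' : v \in V -> F \in inc_edges e V -> F' \in inc_edges e V ->
    v \in F -> v \in F' -> connect R F F'.
  move=> vV FI F'I vF vF'; have [->|FF'] := eqVneq F F'; first exact: connect0.
  apply: connect1; rewrite /R FI F'I /LG_adj FF' /=.
  by apply/exists_inP; exists v; rewrite ?vF.
have endpoint F : F \in inc_edges e V -> exists2 v, v \in V & v \in F.
  by rewrite inE => /andP[_ /exists_inP[w wV wF]]; exists w.
have [v vV vE] := endpoint E EI; have [v' v'V v'E'] := endpoint E' E'I.
have /connectP[p pp lp] := VC v v' vV v'V.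
elim: p v vV E EI vE pp lp => [|c p IH] a aV F FI aF /=.
  by move=> _ lp; subst; apply: (share a).
move=> /andP[/and3P[_ cV eac] pp] lp.
have Fac := edge_incident eac aV.
apply: connect_trans (share a _ _ aV FI Fac aF _) _; first by rewrite !inE eqxx.
by apply: (IH c cV) => //; rewrite !inE eqxx orbT.
Qed.

Lemma prefixes_rcons (A : Type) (Q : seq A -> seq A -> Prop) k (s : seq A) x :
  (forall l, k <= l <= size s -> Q (take l s) (take l.-1 s)) -> Q (rcons s x) s ->
  forall l, k <= l <= size (rcons s x) ->
    Q (take l (rcons s x)) (take l.-1 (rcons s x)).
Proof.
move=> Qs Qlast l; rewrite size_rcons => /andP[kl].
have take_s m : m <= size s -> take m (rcons s x) = take m s.
  by move=> ms; rewrite -cats1 takel_cat.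
rewrite leq_eqVlt ltnS => /orP[/eqP ->|ls].
  by rewrite take_oversize ?size_rcons //= take_s // take_size.
by rewrite !take_s ?(leq_trans (leq_pred l)) //; apply: Qs; rewrite kl.
Qed.

Section Peel.
Variables (T : finType) (e : rel T).
Hypothesis esym : symmetric e.
Hypothesis noCut : forall v, connected_on [set~ v] e.

Lemma induced_sym A : symmetric (induced e A).
Proof. by move=> a b; rewrite /induced esym; case: (a \in A); case: (b \in A). Qed.

Definition connectedb (A : {set T}) :=
  [forall a in A, [forall b in A, connect (induced e A) a b]].

Lemma connectedbP A : reflect (connected_on A e) (connectedb A).
Proof.
apply: (iffP idP) => [/forall_inP AC a b aA bA | AC].
  exact: (forall_inP (AC a aA)).
by apply/forall_inP => a aA; apply/forall_inP => b bA; exact: AC.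
Qed.

Lemma not_connected A : ~~ connectedb A ->
  exists a b, [/\ a \in A, b \in A & ~~ connect (induced e A) a b].
Proof. by move/forall_inPn=> [a aA] /forall_inPn [b bA nab]; exists a, b. Qed.

Variables (u : T) (W : {set T}).
Hypothesis uW : u \notin W.
Hypothesis WC : connected_on W e.

Definition boundary := [set x in W | [exists z, (z \notin W) && e x z]].

Definition comp x y := [set z in W :\ x | connect (induced e (W :\ x)) y z].

Lemma comp_sub x y z : z \in comp x y -> z \in W :\ x.
Proof. by rewrite inE => /andP[]. Qed.

Lemma comp_self x y : y \in W :\ x -> y \in comp x y.
Proof. by move=> yW; rewrite inE yW connect0. Qed.

Lemma comp_closed x y a b : a \in comp x y -> b \in W :\ x -> e a b -> b \in comp x y.
Proof.
rewrite !inE => /andP[/andP[ax aW] ya] /andP[bx bW] eab.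
rewrite bx bW /=; apply: connect_trans ya (connect1 _).
by rewrite /induced !inE ax aW bx bW eab.
Qed.

(* Since x is not a cut vertex, the path from a component of W \ {x} to u
   leaves W through a boundary vertex of that component. *)
Lemma comp_meets_boundary x y : x \in W -> y \in W :\ x ->
  exists2 y', y' \in comp x y & y' \in boundary.
Proof.
move=> xW yW.
have ux : u \in [set~ x] by rewrite !inE; apply: contraNneq uW => ->.
have yx : y \in [set~ x] by move: yW; rewrite !inE => /andP[].
have uC : u \notin comp x y by rewrite inE !inE (negbTE uW) andbF.
have [a [b [/and3P[_ bx eab] aC bC]]] := connect_exit (noCut yx ux) (comp_self yW) uC.
exists a => //.
have bW : b \notin W.
  apply: contra bC => bW; apply: (comp_closed aC _ eab).
  by move: bx; rewrite !inE bW andbT.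
rewrite inE (subsetP (subD1set W x) _ (comp_sub aC)) /=.
by apply/existsP; exists b; rewrite bW eab.
Qed.

Lemma outside_comp_reaches x y y' w : x \in W -> y' \in comp x y -> w \in W ->
  w \notin comp x y -> connect (induced e (W :\ y')) w x.
Proof.
move=> xW y'C wW wC; have /connectP[p pp lp] := WC wW xW.
elim: p w wW wC pp lp => [|b p IH] a aW aC /=; first by move=> _ ->.
move=> /andP[/and3P[_ bW eab] pp] lp.
have [->|ax] := eqVneq a x; first exact: connect0.
have bC : b \notin comp x y.
  apply: contra aC => bC; apply: (comp_closed bC); last by rewrite esym.
  by rewrite !inE ax aW.
apply: connect_trans (IH b bW bC pp lp); apply: connect1.
rewrite /induced !inE aW bW eab !andbT.
by apply/andP; split; [apply: contraNneq aC => -> | apply: contraNneq bC => ->].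
Qed.

Lemma comp_shrink x y : x \in boundary -> y \in W :\ x ->
  (exists2 x', x' \in boundary & connected_on (W :\ x') e) \/
  exists x' y', [/\ x' \in boundary, y' \in W :\ x' & comp x' y' \proper comp x y].
Proof.
move=> xB yW; have xW : x \in W by move: xB; rewrite inE => /andP[].
have [y' y'C y'B] := comp_meets_boundary xW yW.
have [/connectedbP y'C'|/not_connected[a [b [aW' bW' nab]]]] :=
  boolP (connectedb (W :\ y')); first by left; exists y'.
right; exists y'.
have y'x : y' != x by move: (comp_sub y'C); rewrite !inE => /andP[].
have xW' : x \in W :\ y' by rewrite !inE xW eq_sym y'x.
have [a0 a0W' na0x] : exists2 a0, a0 \in W :\ y' & ~~ connect (induced e (W :\ y')) a0 x.
  have [ax|] := boolP (connect (induced e (W :\ y')) a x); last by exists a.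
  exists b => //; apply: contra nab => bx.
  by apply: connect_trans ax _; rewrite (sym_connect_sym (induced_sym _)).
have a0W : a0 \in W by move: a0W'; rewrite !inE => /andP[].
exists a0; split => //; apply/properP; split.
- apply/subsetP => z zC'; apply: contraT => zC.
  have zW : z \in W by move: (comp_sub zC'); rewrite !inE => /andP[].
  move: zC'; rewrite inE => /andP[_ a0z].
  by move: na0x; rewrite (connect_trans a0z (outside_comp_reaches xW y'C zW zC)).
- by exists y' => //; rewrite inE !inE eqxx.
Qed.

Lemma peel_from x y : x \in boundary -> y \in W :\ x ->
  exists2 x', x' \in boundary & connected_on (W :\ x') e.
Proof.
have [n] := ubnP #|comp x y|; elim: n x y => // n IH x y ltCn xB yW.
have [//|[x' [y' [x'B y'W sub]]]] := comp_shrink xB yW.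
apply: IH x'B y'W; rewrite -ltnS; exact: leq_ltn_trans (proper_card sub) ltCn.
Qed.

Hypothesis Gconn : graph_connected e.

Lemma peel w : w \in W -> exists2 x, x \in boundary & connected_on (W :\ x) e.
Proof.
move=> wW.
have [a [b [/and3P[_ _ eab] aW bW]]] := connect_exit (Gconn (in_setT w) (in_setT u)) wW uW.
have aB : a \in boundary by rewrite inE aW; apply/existsP; exists b; rewrite bW eab.
have [/connectedbP aC|/not_connected[y [_ [yW _ _]]]] := boolP (connectedb (W :\ a)).
  by exists a.
exact: peel_from aB yW.
Qed.

End Peel.

Section PeelingOrder.
Variables (T : finType) (e : rel T) (u : T).
Hypothesis esym : symmetric e.
Hypothesis Gconn : graph_connected e.
Hypothesis noCut : forall v, connected_on [set~ v] e.

Lemma peeling_order (W : {set T}) : u \notin W -> connected_on W e ->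
  exists s : seq T,
    [/\ uniq s, (forall v, (v \in s) = (v \in W)),
        (forall l, 1 <= l <= size s -> connected_on [set v in take l s] e) &
        (forall l, 2 <= l <= size s ->
           inc_edges e [set v in take l s] :\: inc_edges e [set v in take l.-1 s]
             != set0)].
Proof.
have [n] := ubnP #|W|; elim: n W => // n IH W ltWn uW WC.
have [->|[w wW]] := set_0Vmem W.
  exists [::]; split => // [v|l|l]; first by rewrite inE.
    by case: l => [|[]].
  by case: l => [|[|[]]].
have [x xB Wx] := peel esym noCut uW WC Gconn wW.
move: xB; rewrite inE => /andP[xW /existsP[z /andP[zW exz]]].
have uWx : u \notin W :\ x by rewrite !inE negb_and uW orbT.
have ltWxn : #|W :\ x| < n by rewrite -ltnS; apply: leq_ltn_trans ltWn; rewrite (cardsD1 x W) xW.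
have [s [us ms sC sNew]] := IH _ ltWxn uWx Wx.
have set_s : [set v in s] = W :\ x by apply/setP => v; rewrite !inE ms !inE.
have set_sx : [set v in rcons s x] = W.
  by apply/setP => v; rewrite !inE mem_rcons in_cons ms !inE; case: eqVneq => // ->.
exists (rcons s x); split.
- by rewrite rcons_uniq us andbT ms !inE eqxx.
- by move=> v; rewrite -set_sx inE.
- apply: (prefixes_rcons (Q := fun p _ => connected_on [set v in p] e)) => //.
  by rewrite set_sx.
- apply: (prefixes_rcons (Q := fun p q => inc_edges e [set v in p] :\:
      inc_edges e [set v in q] != set0)) => //.
  by apply/set0Pn; exists [set x; z]; rewrite set_sx set_s new_edge.
Qed.

End PeelingOrder.

Theorem mainTheorem10 (T : finType) (e : rel T) (u : T) :
  simple_graph e -> two_connected e ->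
  exists s : seq T,
    [/\ uniq s, (forall v, (v \in s) = (v != u)),
        (forall l, 1 <= l <= size s ->
           LG_connected e [set v in take l s]) &
        (forall l, 2 <= l <= size s ->
           inc_edges e [set v in take l s] :\: inc_edges e [set v in take l.-1 s]
             != set0)].
Proof.
move=> [esym _] [Gconn _ noCut].
have uW : u \notin [set~ u] by rewrite !inE eqxx.
have [s [us ms sC sNew]] := peeling_order esym Gconn noCut uW (noCut u).
exists s; split => // [v|l /sC]; first by rewrite ms !inE.
exact: LG_connected_of_connected.
Qed.
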